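(* Let $S$ be a $\mathbb{Q}$-algebra, $\varphi: S\to R$ a ring morphism, $W\in S$, $(X,d_X)$ a finite rank matrix factorisation of $W$ over $R$ with a fixed homogeneous $R$-basis $\{\xi_i\}$, and $\mathbf{t}=\{t_1,\ldots,t_n\}$ a quasi-regular sequence in $R$ with $R/\mathbf{t}R$ finitely generated projective over $S$, with odd $R$-linear $\lambda_j$ on $X$ such that $\lambda_j d_X + d_X\lambda_j = t_j\cdot 1_X$. Suppose $R$ has a standard flat $S$-linear connection $\nabla^0(r)=\sum_j \partial_j(r)\otimes \mathrm{d}t_j$ as an $S[\mathbf{t}]$-module, and define $S$-linear maps $\partial_j$ on $X$ by $\partial_j(r\xi_i) = \partial_j(r)\xi_i$. Then the idempotent $e = \vartheta\circ\psi$ on $X/\mathbf{t}X$ (for which $\psi\circ\vartheta = 1$, $\psi: X/\mathbf{t}X\to\varphi_*(X)[n]$, $\vartheta:\varphi_*(X)[n]\to X/\mathbf{t}X$ in $\mathrm{hf}(S,W)$, and $e = \frac{1}{n!}(-1)^{\binom{n+1}{2}}\lambda_1\cdots\lambda_n\,\mathrm{At}_{S[\mathbf{t}]/S}(X)^n$) is, as an $S$-linear endomorphism of $X/\mathbf{t}X$, \[ e = \frac{1}{n!}(-1)^{\binom{n}{2}} \sum_{\tau\in S_n} \mathrm{sgn}(\tau)\, \lambda_1\cdots\lambda_n\, [\partial_{\tau(1)}, d_X]\cdots[\partial_{\tau(n)},d_X]. \]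
   Context: All rings commutative. A linear factorisation of $W$ over $R$ is a $\mathbb{Z}/2$-graded $R$-module $X$ with an odd $R$-linear $d_X$, $d_X^2=W\cdot 1_X$; a finite rank matrix factorisation has $X^0,X^1$ free of finite rank. $\mathrm{hf}(S,W)$ is the homotopy category of linear factorisations of $W$ over $S$; $X[n]$ is the $n$-fold suspension (grading shifted, differential multiplied by $(-1)^n$); $\varphi_*$ is restriction of scalars; $X/\mathbf{t}X = X\otimes_R R/\mathbf{t}R$. $S[\mathbf{t}]$ is the polynomial ring in formal variables $t_i$, and $R$ an $S[\mathbf{t}]$-algebra. The connection $\nabla^0: R\to R\otimes_{S[\mathbf{t}]}\Omega^1_{S[\mathbf{t}]/S}$ is $S$-linear with the Leibniz rule; flat means the $\partial_j$ commute; standard means flat and, for each integer $p>0$, $r\mapsto pr+\sum_j t_j\partial_j(r)$ is a bijection of $R$ mapping $\mathbf{t}R$ onto $\mathbf{t}R$, and the image of $r\mapsto\sum_jt_j\partial_j(r)$ is $\mathbf{t}R$. The commutators $[\partial_j,d_X]$ are $S[\mathbf{t}]$-linear odd maps on $X$ (here $d_X$ acts via its matrix in the basis), so induce $S$-linear maps on $X/\mathbf{t}X$. The Atiyah class $\mathrm{At}_{S[\mathbf{t}]/S}(X) = [d_X,\nabla_X]$ with $\nabla_X(r\xi_i) = \xi_i\otimes\nabla^0(r)$, iterated $n$ times and trivialising $\Omega^n_{S[\mathbf{t}]/S}$ by $\mathrm{d}t_1\wedge\cdots\wedge\mathrm{d}t_n$, is a degree $n$ $S[\mathbf{t}]$-linear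 endomorphism of $X$. *)

From HB Require Import structures.
From mathcomp Require Import all_boot all_order all_algebra all_fingroup.
From mathcomp Require Import mpoly.
Set Implicit Arguments. Unset Strict Implicit. Unset Printing Implicit Defensive.
Import Order.TTheory GRing.Theory.
Local Open Scope ring_scope.

Definition in_tR (R : comNzRingType) (n : nat) (t : 'I_n -> R) (r : R) : Prop :=
  exists a : 'I_n -> R, r = \sum_(j < n) t j * a j.

(* x \in tX, for X = R^m (column vectors in the fixed basis xi_i) *)
Definition in_tX (R : comNzRingType) (n m : nat) (t : 'I_n -> R)
    (x : 'cV[R]_m) : Prop :=
  exists y : 'I_n -> 'cV[R]_m, x = \sum_(j < n) t j *: y j.

(* r \in (tR)^k : the k-th power of the ideal tR is the R-span of the
   monomials of degree k in the t_j, i.e. the values at t of the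
   homogeneous polynomials of degree k over R. *)
Definition in_tR_pow (R : comNzRingType) (n : nat) (t : 'I_n -> R) (k : nat)
    (r : R) : Prop :=
  exists G : {mpoly R[n]}, G \is k.-homog /\ r = G.@[t].

(* Quasi-regular sequence (Matsumura): the canonical surjection
   (R/I)[x_1..x_n] -> gr_I(R) is injective, i.e. whenever a homogeneous
   polynomial F of degree k over R satisfies F(t) \in I^(k+1), all the
   coefficients of F lie in I = tR. *)
Definition quasi_regular (R : comNzRingType) (n : nat) (t : 'I_n -> R) : Prop :=
  forall (k : nat) (F : {mpoly R[n]}), F \is k.-homog ->
    in_tR_pow t k.+1 F.@[t] -> forall mon, in_tR t (F@_mon).

(* R/tR is a finitely generated projective S-module (S acting through phi):
   R/tR is a retract (direct summand) of a finite free module S^k. *)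
Definition quot_fg_projective (S R : comNzRingType) (phi : {rmorphism S -> R})
    (n : nat) (t : 'I_n -> R) : Prop :=
  exists (k : nat) (a : R -> 'rV[S]_k) (b : 'rV[S]_k -> R),
    [/\ (forall r r', a (r + r') = a r + a r'),
        (forall s r, a (phi s * r) = s *: a r),
        (forall r, in_tR t r -> a r = 0) &
        [/\ (forall v v', b (v + v') = b v + b v'),
         (forall s v, b (s *: v) = phi s * b v) &
         (forall r, in_tR t (b (a r) - r))]].

Definition Q_algebra (S : unitRingType) : Prop :=
  forall k : nat, (k.+1)%:R \is a @GRing.unit S.

Definition is_connection (S R : comNzRingType) (phi : {rmorphism S -> R})
    (n : nat) (t : 'I_n -> R) (del : 'I_n -> R -> R) : Prop :=
  (forall j r r', del j (r + r') = del j r + del j r') /\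
  (forall j s r, del j (phi s * r) = phi s * del j r) /\
  (forall j (P : {mpoly S[n]}) r,
      del j (mmap phi t P * r) = mmap phi t P * del j r + mmap phi t (mderiv j P) * r).

Definition is_flat (R : Type) (n : nat) (del : 'I_n -> R -> R) : Prop :=
  forall j k r, del j (del k r) = del k (del j r).

Definition is_standard (R : comNzRingType) (n : nat) (t : 'I_n -> R)
    (del : 'I_n -> R -> R) : Prop :=
  is_flat del /\
  (forall p : nat, (0 < p)%N ->
     let f := fun r : R => p%:R * r + \sum_(j < n) t j * del j r in
     bijective f /\
     (forall r, in_tR t r -> in_tR t (f r)) /\
     (forall y, in_tR t y -> exists2 r, in_tR t r & f r = y)) /\
  (forall y, in_tR t y <-> exists r, \sum_(j < n) t j * del j r = y).

(* Matrix factorisations: X = R^m with homogeneous basis xi_i, the     *)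
(* parity of xi_i being par i.                                         *)

Definition is_odd_mx (R : nzRingType) (m : nat) (par : 'I_m -> bool)
    (A : 'M[R]_m) : Prop :=
  forall i k, par i = par k -> A i k = 0.

Definition delX (R : Type) (n m : nat) (del : 'I_n -> R -> R) (j : 'I_n)
    (x : 'cV[R]_m) : 'cV[R]_m := map_mx (del j) x.

Definition comm_del_d (R : comNzRingType) (n m : nat) (del : 'I_n -> R -> R)
    (D : 'M[R]_m) (j : 'I_n) (x : 'cV[R]_m) : 'cV[R]_m :=
  delX del j (D *m x) - D *m delX del j x.

(* X (x)_R Omega^*_{S[t]/S}: Omega^* is the exterior algebra over R on *)
(* dt_1..dt_n (placed in even degree); an element is the family of its *)
(* coefficients along dt_I = dt_{i1} /\ ... /\ dt_{ik}, i1 < ... < ik.  *)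

Definition XOm (R : Type) (n m : nat) := {ffun {set 'I_n} -> 'cV[R]_m}.

(* dt_J /\ dt_I = (-1)^{#inversions} dt_{J u I}  (J, I disjoint) *)
Definition wsign (R : nzRingType) (n : nat) (J I : {set 'I_n}) : R :=
  (-1) ^+ #|[set ab in setX J I | (ab.2 < ab.1)%N]|.

Definition tensor_basis (R : nzRingType) (n m : nat) (x : 'cV[R]_m)
    (I : {set 'I_n}) : XOm R n m :=
  [ffun K => if K == I then x else 0].

Definition wedge_basis (R : nzRingType) (n m : nat) (g : XOm R n m)
    (I : {set 'I_n}) : XOm R n m :=
  [ffun K => \sum_(J : {set 'I_n} | (J :&: I == set0) && (J :|: I == K))
               wsign R J I *: g J].

Definition nablaX (R : nzRingType) (n m : nat) (del : 'I_n -> R -> R)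
    (x : 'cV[R]_m) : XOm R n m :=
  \sum_(j < n) tensor_basis (delX del j x) [set j].

Definition dXOm (R : nzRingType) (n m : nat) (D : 'M[R]_m) (g : XOm R n m)
    : XOm R n m := [ffun K => D *m g K].

(* Atiyah class At(X) = [d_X, nabla_X] : X -> X (x) Omega^1
   (nabla_X even, d_X odd, so the graded commutator is d nabla - nabla d) *)
Definition Atiyah (R : nzRingType) (n m : nat) (del : 'I_n -> R -> R)
    (D : 'M[R]_m) (x : 'cV[R]_m) : XOm R n m :=
  dXOm D (nablaX del x) - nablaX del (D *m x).

Definition Atiyah_ext (R : nzRingType) (n m : nat) (del : 'I_n -> R -> R)
    (D : 'M[R]_m) (g : XOm R n m) : XOm R n m :=
  \sum_(I : {set 'I_n}) wedge_basis (Atiyah del D (g I)) I.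

(* At^n : X -> X (x) Omega^n, trivialised by dt_1 /\ ... /\ dt_n *)
Definition Atiyah_pow_top (R : nzRingType) (n m : nat) (del : 'I_n -> R -> R)
    (D : 'M[R]_m) (x : 'cV[R]_m) : 'cV[R]_m :=
  (iter n (Atiyah_ext del D) (tensor_basis x set0)) setT.

Definition idem_e (R : comUnitRingType) (n m : nat) (del : 'I_n -> R -> R)
    (D : 'M[R]_m) (lam : 'I_n -> 'M[R]_m) (x : 'cV[R]_m) : 'cV[R]_m :=
  ((n`!)%:R)^-1 * (-1) ^+ 'C(n.+1, 2) *:
     ((\prod_(j < n) lam j) *m Atiyah_pow_top del D x).

Definition idem_formula (R : comUnitRingType) (n m : nat)
    (del : 'I_n -> R -> R) (D : 'M[R]_m) (lam : 'I_n -> 'M[R]_m)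
    (x : 'cV[R]_m) : 'cV[R]_m :=
  ((n`!)%:R)^-1 * (-1) ^+ 'C(n, 2) *:
    \sum_(tau : 'S_n) (-1) ^+ (odd_perm tau) *:
       ((\prod_(j < n) lam j) *m
          foldr (fun i y => comm_del_d del D (tau i) y) x (enum 'I_n)).

(** Expanding [At^n] on [x ⊗ 1] one factor at a time, the coefficient of
    [dt_1 ∧ ... ∧ dt_n] is a sum over all words [j_1 ... j_n] with distinct
    letters of the products [-[∂_{j_1}, d] ... -[∂_{j_n}, d] x], each weighted
    by the sign reordering [dt_{j_1} ∧ ... ∧ dt_{j_n}], i.e. by the parity of
    the number of inversions of the word.  Such words are permutations [τ],
    whose inversion parity is [sgn τ]; the extra [(-1)^n] combines with
    [(-1)^binom(n+1,2)] into [(-1)^binom(n,2)].  So the two sides are equal,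
    not merely congruent modulo [tX], and of all the hypotheses only the
    additivity of the [∂_j] is needed. *)
From HB Require Import structures.
From mathcomp Require Import all_boot all_order all_algebra all_fingroup.
From mathcomp Require Import mpoly.
Import GRing.Theory.

Set Implicit Arguments.
Unset Strict Implicit.
Unset Printing Implicit Defensive.

Fixpoint inversions (k : nat) : ('I_k -> nat) -> nat :=
  match k return ('I_k -> nat) -> nat with
  | 0 => fun _ => 0%N
  | k1.+1 => fun f =>
      (#|[set i : 'I_k1 | f (lift ord0 i) < f ord0]|
        + inversions (fun i => f (lift ord0 i)))%N
  end.

Lemma eq_inversions k (f g : 'I_k -> nat) : f =1 g -> inversions f = inversions g.
Proof.
elim: k f g => [|k IH] f g fg //=.
rewrite (IH _ (fun i => g (lift ord0 i))) => [|i]; last exact: fg.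
by congr (_ + _)%N; apply: eq_card => i; rewrite !inE !fg.
Qed.

Lemma inversions_mono k (f : 'I_k -> nat) (g : nat -> nat) :
  {mono g : a b / a < b} -> inversions (g \o f) = inversions f.
Proof.
move=> gmono; elim: k f => [|k IH] f //=.
rewrite (IH (fun i => f (lift ord0 i))).
by congr (_ + _)%N; apply: eq_card => i; rewrite !inE /= gmono.
Qed.

Lemma card_ord_ltn N j : (j <= N)%N -> #|[set k : 'I_N | k < j]| = j.
Proof.
move=> le_jN; have widen_inj : injective (widen_ord le_jN).
  by move=> a b /(congr1 val) /= /val_inj.
rewrite -[RHS]card_ord -(card_imset _ widen_inj).
apply: eq_card => k; rewrite !inE; apply/idP/imsetP => [lt_kj | [i _ ->]] //=.
by exists (Ordinal lt_kj) => //; apply: val_inj.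
Qed.

Lemma exists_lift_perm0 N (s : 'S_N.+1) : exists s' : 'S_N, s = lift_perm ord0 (s ord0) s'.
Proof.
pose f k := odflt k (unlift (s ord0) (s (lift ord0 k))).
have fK k : lift (s ord0) (f k) = s (lift ord0 k).
  rewrite /f; have := neq_lift ord0 k.
  by rewrite -(can_eq (permK s)) => /unlift_some[] ? ? ->.
have f_inj : injective f.
  by move=> a b eq_f; apply/(@lift_inj _ ord0)/(@perm_inj _ s); rewrite -!fK eq_f.
exists (perm f_inj); apply/permP => k.
case: (unliftP ord0 k) => [k'|] ->; rewrite ?lift_perm_id //.
by rewrite lift_perm_lift permE fK.
Qed.

Lemma lift_ltn N (j : 'I_N.+1) (k : 'I_N) : (lift j k < j) = (k < j).
Proof.
rewrite /= /bump; case: (leqP j k) => [le_jk | lt_kj]; last by rewrite lt_kj.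
by apply/negbTE; rewrite -leqNgt (leq_trans le_jk).
Qed.

Lemma odd_inversions_perm N (s : 'S_N) : odd (inversions (fun i => s i)) = odd_perm s.
Proof.
elim: N s => [|N IH] s; first by rewrite /= (permS0 s) odd_perm1.
have [s' def_s] := @exists_lift_perm0 N s; rewrite def_s; set j := s ord0 => /=.
rewrite lift_perm_id (@eq_inversions _ _ (bump j \o (fun i => nat_of_ord (s' i)))); last first.
  by move=> i; rewrite lift_perm_lift.
rewrite inversions_mono; last by move=> a b; rewrite !ltnNge leq_bump2.
rewrite (eq_card (B := s' @^-1: [set k : 'I_N | k < j])); last first.
  by move=> i; rewrite !inE lift_perm_lift lift_ltn.
rewrite card_preimset; last exact: perm_inj.
rewrite card_ord_ltn; last by rewrite -ltnS.
by rewrite oddD IH odd_lift_perm.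
Qed.

Local Open Scope ring_scope.

Definition ffcons (T : Type) k (a : T) (f : {ffun 'I_k -> T}) : {ffun 'I_k.+1 -> T} :=
  [ffun i => if unlift ord0 i is Some i' then f i' else a].

Section Words.
Variables (T : finType) (k : nat).
Implicit Types (a : T) (f : {ffun 'I_k -> T}).

Lemma ffcons0 a f : ffcons a f ord0 = a.
Proof. by rewrite ffunE unlift_none. Qed.

Lemma ffcons_lift a f i : ffcons a f (lift ord0 i) = f i.
Proof. by rewrite ffunE liftK. Qed.

Lemma big_ffcons (V : nmodType) (F : {ffun 'I_k.+1 -> T} -> V) :
  \sum_f F f = \sum_a \sum_(f : {ffun 'I_k -> T}) F (ffcons a f).
Proof.
rewrite pair_big /= (reindex (fun p : T * {ffun 'I_k -> T} => ffcons p.1 p.2)) //=.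
exists (fun f : {ffun 'I_k.+1 -> T} => (f ord0, [ffun i => f (lift ord0 i)])).
  move=> [a f] _ /=.
  by rewrite ffcons0; congr (_, _); apply/ffunP => i; rewrite ffunE ffcons_lift.
move=> f _; apply/ffunP => i; rewrite !ffunE.
by case: (unliftP ord0 i) => [i'|] ->; rewrite ?ffunE.
Qed.

Lemma imset_ffcons a f : [set ffcons a f i | i in 'I_k.+1] = a |: [set f i | i in 'I_k].
Proof.
apply/setP => y; rewrite in_setU1.
apply/imsetP/predU1P => [[i _ ->]|[-> | /imsetP[i _ ->]]].
- case: (unliftP ord0 i) => [i'|] ->; rewrite ?ffcons_lift ?ffcons0; last by left.
  by right; apply/imsetP; exists i'.
- by exists ord0; rewrite ?ffcons0.
- by exists (lift ord0 i); rewrite ?ffcons_lift.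
Qed.

Lemma setU1_imset_eq a f (K : {set T}) : a \in K -> #|K| = k.+1 ->
  (a |: [set f i | i in 'I_k] == K) = ([set f i | i in 'I_k] == K :\ a).
Proof.
move=> Ka cardK; apply/eqP/eqP => [defK | ->]; last by rewrite setD1K.
suff a_im : a \notin [set f i | i in 'I_k] by rewrite -defK setU1K.
apply/negP => a_im; have := leq_imset_card f 'I_k.
by rewrite card_ord -ltnS -cardK -defK cardsU1 a_im ltnn.
Qed.

End Words.

Lemma inversions_ffcons n k j (f : {ffun 'I_k -> 'I_n}) (K : {set 'I_n}) :
    [set f i | i in 'I_k] = K :\ j -> #|K :\ j| = k ->
  inversions (fun i => val (ffcons j f i)) =
  (#|[set ab in setX [set j] (K :\ j) | (ab.2 < ab.1)%N]|
    + inversions (fun i => val (f i)))%N.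
Proof.
move=> imf cardKj /=; rewrite ffcons0.
rewrite (@eq_inversions _ _ (fun i => val (f i))); last by move=> i; rewrite ffcons_lift.
congr (_ + _)%N.
have f_inj : injective f.
  by move=> a b; apply: (@imset_injP _ _ f 'I_k) => //; rewrite imf cardKj card_ord.
rewrite -(@card_imset _ _ (fun i => (j, f i))); last by move=> a b [] /f_inj.
apply: eq_card => -[a b]; rewrite !inE /=; apply/imsetP/andP => [[i]|].
  rewrite inE ffcons_lift => lt_fij [-> ->].
  have : f i \in K :\ j by rewrite -imf imset_f.
  by rewrite in_setD1 eqxx lt_fij => ->.
move=> [/and3P[/eqP-> b_neq_j Kb] lt_bj].
have : b \in K :\ j by rewrite in_setD1 b_neq_j.
rewrite -imf => /imsetP[i _ def_b]; exists i; last by rewrite def_b.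
by rewrite inE ffcons_lift -def_b.
Qed.

Lemma big_set1_sum (T : finType) (V : nmodType) (P : pred {set T})
    (F : {set T} -> T -> V) :
  \sum_(J | P J) \sum_(i | J == [set i]) F J i = \sum_(i | P [set i]) F [set i] i.
Proof.
rewrite (exchange_big_dep xpredT) //= [RHS]big_mkcond; apply: eq_bigr => i _.
case: (boolP (P [set i])) => Pi.
  rewrite (eq_bigl (pred1 [set i])) ?big_pred1_eq // => J /=.
  by case: eqP => [->|]; rewrite ?Pi ?andbF.
by rewrite big_pred0 // => J; case: eqP => [->|]; rewrite ?(negbTE Pi) ?andbF.
Qed.

Lemma subrACA (V : zmodType) (a b c d : V) : (a - b) - (c - d) = (a - c) - (b - d).
Proof.
rewrite -!addrA; congr (_ + _).
by rewrite !opprB addrCA [RHS]addrCA [- c + _]addrC.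
Qed.

Section AtiyahPowers.
Variables (R : comUnitRingType) (n m : nat) (del : 'I_n -> R -> R) (D : 'M[R]_m).
Hypothesis del_add : forall j r r', del j (r + r') = del j r + del j r'.

Lemma comm_del_d_is_zmod_morphism j : zmod_morphism (comm_del_d del D j).
Proof.
have del0 : del j 0 = 0.
  by apply: (@addrI _ (del j 0)); rewrite -del_add !addr0.
have del_opp r : del j (- r) = - del j r.
  by apply: (@addrI _ (del j r)); rewrite -del_add !subrr.
have delX_add y z : delX del j (y + z) = delX del j y + delX del j z.
  by apply/matrixP => a b; rewrite !mxE del_add.
have delX_opp y : delX del j (- y) = - delX del j y.
  by apply/matrixP => a b; rewrite !mxE del_opp.
by move=> y z; rewrite /comm_del_d mulmxBr !delX_add !delX_opp mulmxDr mulmxN subrACA.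
Qed.

HB.instance Definition _ j :=
  GRing.isZmodMorphism.Build _ _ (comm_del_d del D j) (comm_del_d_is_zmod_morphism j).

Lemma AtiyahE (y : 'cV[R]_m) K :
  Atiyah del D y K = - \sum_(j < n | K == [set j]) comm_del_d del D j y.
Proof.
rewrite /Atiyah /dXOm /nablaX !ffunE !sum_ffunE mulmx_sumr -sumrB -sumrN.
rewrite [RHS]big_mkcond; apply: eq_bigr => j _; rewrite /tensor_basis !ffunE.
by case: eqP; rewrite ?mulmx0 ?subrr ?oppr0 // opprB.
Qed.

Lemma disjoint_set1_setU1E (K I : {set 'I_n}) j :
  ([set j] :&: I == set0) && ([set j] :|: I == K) = (j \in K) && (I == K :\ j).
Proof.
apply/andP/andP => [[/eqP disj /eqP <-] | [Kj /eqP ->]]; last first.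
  split; last by rewrite setD1K.
  by apply/eqP/setP => y; rewrite !inE; case: eqP.
split; first by rewrite setU11.
suff jNI : j \notin I by rewrite setU1K.
by apply/negP => jI; move/setP: disj => /(_ j); rewrite !inE eqxx jI.
Qed.

Lemma Atiyah_extE (g : XOm R n m) K :
  Atiyah_ext del D g K =
  - \sum_(j in K) wsign R [set j] (K :\ j) *: comm_del_d del D j (g (K :\ j)).
Proof.
rewrite /Atiyah_ext sum_ffunE.
under eq_bigr => I _.
  rewrite /wedge_basis ffunE.
  under eq_bigr => J _ do rewrite AtiyahE scalerN scaler_sumr.
  rewrite sumrN big_set1_sum.
  over.
rewrite /= sumrN; congr (- _).
rewrite (exchange_big_dep xpredT) //= [RHS]big_mkcond; apply: eq_bigr => j _.
under eq_bigl => I do rewrite disjoint_set1_setU1E.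
by case: (j \in K); rewrite /= ?big_pred1_eq ?big_pred0.
Qed.

Definition comm_word k (f : 'I_k -> 'I_n) (x : 'cV[R]_m) : 'cV[R]_m :=
  foldr (fun i y => comm_del_d del D (f i) y) x (enum 'I_k).

Lemma eq_comm_word k (f g : 'I_k -> 'I_n) x : f =1 g -> comm_word f x = comm_word g x.
Proof. by move=> fg; rewrite /comm_word; elim: (enum _) => //= a s ->; rewrite fg. Qed.

Lemma comm_word_ffcons k j (f : {ffun 'I_k -> 'I_n}) x :
  comm_word (ffcons j f) x = comm_del_d del D j (comm_word f x).
Proof.
rewrite /comm_word enum_ordSl /= ffcons0 foldr_map; congr comm_del_d.
by apply: eq_comm_word => i; rewrite ffcons_lift.
Qed.

Lemma iter_Atiyah_extE x k (K : {set 'I_n}) : #|K| = k ->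
  iter k (Atiyah_ext del D) (tensor_basis x set0) K =
  \sum_(f : {ffun 'I_k -> 'I_n} | [set f i | i in 'I_k] == K)
     (-1) ^+ (k + inversions (fun i => val (f i))) *: comm_word f x.
Proof.
elim: k K => [|k IH] K cardK.
  move/cards0_eq: cardK => ->; pose f0 : {ffun 'I_0 -> 'I_n} := ffun0 (card_ord 0).
  rewrite (big_pred1 f0) => [|f]; last first.
    rewrite /= (_ : f = f0); last by apply/ffunP => -[].
    by rewrite eqxx; apply/eqP/setP => y; rewrite inE; apply/imsetP => -[[]].
  by rewrite /= /tensor_basis ffunE eqxx scale1r /comm_word enum_ord0.
rewrite iterS Atiyah_extE [RHS]big_mkcond big_ffcons big_mkcond -sumrN.
apply: eq_bigr => j _; case: ifP => Kj; last first.
  rewrite big1 => [|f _]; first exact: oppr0.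
  rewrite imset_ffcons.
  by case: eqP => // defK; move: Kj; rewrite -defK setU11.
have cardKj : #|K :\ j| = k by move: cardK; rewrite (cardsD1 j K) Kj => -[].
rewrite IH // raddf_sum scaler_sumr -sumrN big_mkcond; apply: eq_bigr => f _.
rewrite imset_ffcons setU1_imset_eq //; case: eqP => // imf.
rewrite (raddfZsign (comm_del_d del D j)) scalerA comm_word_ffcons.
by rewrite (inversions_ffcons imf cardKj) addSn exprS mulN1r scaleNr /wsign -exprD addnCA.
Qed.

Lemma Atiyah_pow_topE x :
  Atiyah_pow_top del D x =
  (-1) ^+ n *: \sum_(s : 'S_n) (-1) ^+ odd_perm s *: comm_word s x.
Proof.
rewrite /Atiyah_pow_top (@iter_Atiyah_extE x n setT); last by rewrite cardsT card_ord.
rewrite scaler_sumr (reindex (fun s : 'S_n => pval s)) /=; last first.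
  exists (insubd (1%g : 'S_n)) => [s _ | f]; first exact: valKd.
  rewrite inE => /eqP imf; apply: insubdK.
  have f_inj : {in 'I_n &, injective f} by apply/imset_injP; rewrite imf cardsT.
  by apply/injectiveP => a b; apply: f_inj.
apply: eq_big => [s | s _].
  apply/eqP/setP => y; rewrite in_setT; apply/imsetP.
  by exists (s^-1 y)%g; rewrite // pvalE permKV.
rewrite (@eq_inversions _ _ (fun i => nat_of_ord (s i))) => [|i]; last by rewrite pvalE.
rewrite (@eq_comm_word _ _ s) => [|i]; last by rewrite pvalE.
rewrite scalerA -exprD; congr (_ *: _).
by rewrite -[LHS]signr_odd -[RHS]signr_odd !oddD odd_inversions_perm oddb.
Qed.
End AtiyahPowers.

Theorem corollary10p4
  (S R : comUnitRingType) (phi : {rmorphism S -> R}) (W : S)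
  (hQ : Q_algebra S)
  (m : nat) (par : 'I_m -> bool) (D : 'M[R]_m)
  (hDodd : is_odd_mx par D) (hD2 : D *m D = (phi W)%:M)
  (n : nat) (t : 'I_n -> R)
  (hqreg : quasi_regular t) (hproj : quot_fg_projective phi t)
  (lam : 'I_n -> 'M[R]_m)
  (hlamodd : forall j, is_odd_mx par (lam j))
  (hlam : forall j, lam j *m D + D *m lam j = (t j)%:M)
  (del : 'I_n -> R -> R)
  (hconn : is_connection phi t del) (hstd : is_standard t del) :
  forall x : 'cV[R]_m, in_tX t (idem_e del D lam x - idem_formula del D lam x).
Proof.
move=> x.
suff -> : idem_e del D lam x = idem_formula del D lam x.
  by exists (fun=> 0); rewrite subrr big1 // => j _; rewrite scaler0.
have sign_binS : (-1) ^+ 'C(n.+1, 2) * (-1) ^+ n = (-1) ^+ 'C(n, 2) :> R.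
  by rewrite -exprD binS bin1 -addnA addnn -mul2n exprD mulnC exprM sqrr_sign mulr1.
rewrite /idem_e /idem_formula (Atiyah_pow_topE _ hconn.1) -scalemxAr scalerA.
rewrite -mulrA sign_binS mulmx_sumr; congr (_ *: _); apply: eq_bigr => s _.
by rewrite -scalemxAr.
Qed.
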